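(* Let $X\in\mathcal{L}\cap\mathcal{M}(r)$ with $s=\operatorname{rank}(X)$, let $y\in\mathbb{R}^l$ and $\alpha>0$. Set $\beta=\sigma_r(X)/\|\nabla_XL(X;y)\|_2$ if $\nabla_XL(X;y)\ne O$ and $\beta=\infty$ otherwise. Consider the statements (a) $-\nabla_XL(X;y)\in\mathrm{N}^F_{\mathcal{M}(r)}(X)$ (i.e. $X$ is an $F$-stationary point with multiplier $y$); (b) $X\in\Pi_{\mathcal{M}(r)}(X-\alpha\nabla_XL(X;y))$ (i.e. $X$ is an $\alpha$-stationary point with multiplier $y$). Then: (i) (b) implies (a); (ii) if $s=r$ and $\alpha\in(0,\beta]$, then (a) implies (b); (iii) if $s<r$, then (a) implies (b).
   Context: $\langle X,Y\rangle=\sum_{i,j}X_{ij}Y_{ij}$, $\|\cdot\|_F$ the Frobenius norm, $\|\cdot\|_2$ the spectral norm, $\sigma_r(X)$ the $r$-th largest singular value. $f:\mathbb{R}^{m\times n}\to\mathbb{R}$ continuously differentiable; $A^1,\dots,A^l\in\mathbb{R}^{m\times n}$, $b\in\mathbb{R}^l$; $\mathcal{A}(X)=(\langle A^1,X\rangle,\dots,\langle A^l,X\rangle)^\top$; $\mathcal{L}=\{X:\mathcal{A}(X)=b\}$; $\mathcal{M}(r)=\{X:\operatorname{rank}X\le r\}$ with $0\le r<n\le m$. Lagrangian $L(X;y)=f(X)+\sum_{i=1}^ly_i(\langle A^i,X\rangle-b_i)$. $\Pi_{\mathcal{M}(r)}(Z)=\operatorname{argmin}_{Y\in\mathcal{M}(r)}\|Y-Z\|_F$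 (a set). For closed $\Omega$, $X\in\Omega$: $\mathrm{T}^B_\Omega(X)$ is the set of $\Xi$ with $X^k\in\Omega$, $X^k\to X$, $t_k\downarrow0$, $(X^k-X)/t_k\to\Xi$; $\mathrm{N}^F_\Omega(X)=\{Y:\langle Y,\Xi\rangle\le0\ \forall\Xi\in\mathrm{T}^B_\Omega(X)\}$. *)

From HB Require Import structures.
From mathcomp Require Import all_boot all_order all_algebra.
From mathcomp Require Import all_classical all_reals all_analysis.
Set Implicit Arguments. Unset Strict Implicit. Unset Printing Implicit Defensive.
Import Order.TTheory GRing.Theory Num.Theory.
Import numFieldNormedType.Exports.
Local Open Scope classical_set_scope.
Local Open Scope ring_scope.

Section Defs.
Variable R : realType.

Definition frob_inner {m n : nat} (X Y : 'M[R]_(m, n)) : R :=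
  \sum_(i < m) \sum_(j < n) X i j * Y i j.

Definition frob_norm {m n : nat} (X : 'M[R]_(m, n)) : R :=
  Num.sqrt (frob_inner X X).

Definition spec_norm {m n : nat} (G : 'M[R]_(m, n)) : R :=
  sup [set frob_norm (G *m v) | v in [set v : 'cV[R]_n | frob_norm v = 1]].

Definition is_svd {m n : nat} (X : 'M[R]_(m, n)) (U : 'M[R]_m)
    (s : nat -> R) (V : 'M[R]_n) : Prop :=
  [/\ U^T *m U = 1%:M, V^T *m V = 1%:M,
      (forall k, (k < n)%N -> 0 <= s k) /\
      (forall k k', (k <= k')%N -> (k' < n)%N -> s k' <= s k),
      (forall k, (n <= k)%N -> s k = 0) &
      X = U *m (\matrix_(i < m, j < n) (if (i : nat) == j then s i else 0))
          *m V^T].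

(* sigma_k(X): the k-th largest singular value (1-indexed, k >= 1) *)
Definition sing_val {m n : nat} (k : nat) (X : 'M[R]_(m, n)) : R :=
  xget 0 [set x | exists U s V, is_svd X U s V /\ x = s k.-1].

Definition lowrank (m n r : nat) : set 'M[R]_(m, n) :=
  [set X | (\rank X <= r)%N].

Definition proj_lowrank {m n : nat} (r : nat) (Z : 'M[R]_(m, n))
  : set 'M[R]_(m, n) :=
  [set Y | Y \in @lowrank m n r /\
     forall W, W \in @lowrank m n r -> frob_norm (Y - Z) <= frob_norm (W - Z)].

Definition bouligand_tangent {m n : nat} (Om : set 'M[R]_(m, n))
    (X : 'M[R]_(m, n)) : set 'M[R]_(m, n) :=
  [set Xi | exists (Xs : nat -> 'M[R]_(m, n)) (t : nat -> R),
     [/\ (forall k, Om (Xs k)) /\ Xs @ \oo --> X,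
         forall k, 0 < t k,
         {homo t : i j / (i <= j)%N >-> j <= i},
         t @ \oo --> 0 &
         (fun k => (t k)^-1 *: (Xs k - X)) @ \oo --> Xi]].

Definition frechet_normal {m n : nat} (Om : set 'M[R]_(m, n))
    (X : 'M[R]_(m, n)) : set 'M[R]_(m, n) :=
  [set Y | forall Xi, bouligand_tangent Om X Xi -> frob_inner Y Xi <= 0].

Definition is_gradient {m n : nat} (F : 'M[R]_(m, n) -> R)
    (G X : 'M[R]_(m, n)) : Prop :=
  differentiable F X /\ forall H, 'd F X H = frob_inner G H.

Definition C1 {m n : nat} (F : 'M[R]_(m, n) -> R) : Prop :=
  exists gF : 'M[R]_(m, n) -> 'M[R]_(m, n),
    continuous gF /\ forall X, is_gradient F (gF X) X.

Definition lin_op {m n l : nat} (A : 'I_l -> 'M[R]_(m, n))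
    (X : 'M[R]_(m, n)) : 'cV[R]_l :=
  \col_(i < l) frob_inner (A i) X.

Definition lagrangian {m n l : nat} (f : 'M[R]_(m, n) -> R)
    (A : 'I_l -> 'M[R]_(m, n)) (b : 'cV[R]_l) (X : 'M[R]_(m, n))
    (y : 'cV[R]_l) : R :=
  f X + \sum_(i < l) y i 0 * (frob_inner (A i) X - b i 0).

End Defs.
Arguments lowrank {R} m n r.

(** Perturbing X
along P X and X Q does not increase the rank, so F-stationarity forces
X G^T = 0 and G^T X = 0; if rank X < r every rank-one perturbation stays in
M(r), which forces G = 0.  Conversely, X being a nearest point of M(r) to
X - alpha G makes -G nonpositive on every tangent direction.
For (ii) put N = alpha G and take W in M(r).  With P the orthogonal projection
onto the row space of W and Q the one onto the top r right singular vectors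
of X, Pythagoras and N^T X = 0 give
  |W - X + N|^2 - |N|^2 >= |X (I - P)|^2 - |N P|^2,
while N Q = 0 and |N|_2 <= sigma_r(X) give
  |N P|^2 = |N (I - Q) P|^2 <= sigma_r^2 (tr P - tr QP)
          <= sigma_r^2 (tr Q - tr QP) <= |X (I - P)|^2. *)

From HB Require Import structures.
From mathcomp Require Import all_boot all_order all_algebra.
From mathcomp Require Import all_classical all_reals all_analysis.
From mathcomp Require Import ring lra zify.
Import Order.TTheory GRing.Theory Num.Theory.
Import numFieldNormedType.Exports.
Set Implicit Arguments. Unset Strict Implicit. Unset Printing Implicit Defensive.
Local Open Scope classical_set_scope.
Local Open Scope ring_scope.

Section FrobeniusInner.
Variable R : realType.

Lemma frob_innerE m n (A B : 'M[R]_(m, n)) : frob_inner A B = \tr (A^T *m B).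
Proof.
rewrite /frob_inner /mxtrace exchange_big; apply: eq_bigr => j _; rewrite mxE.
by apply: eq_bigr => i _; rewrite mxE.
Qed.

Lemma frob_inner_ge0 m n (A : 'M[R]_(m, n)) : 0 <= frob_inner A A.
Proof.
by apply: sumr_ge0 => i _; apply: sumr_ge0 => j _; rewrite -expr2 sqr_ge0.
Qed.

Lemma frob_inner_eq0 m n (A : 'M[R]_(m, n)) : frob_inner A A = 0 -> A = 0.
Proof.
move=> h; apply/matrixP => i j; rewrite mxE.
have h1 := psumr_eq0P (fun i _ => sumr_ge0 _ (fun j _ => sqr_ge0 (A i j))) h.
have h2 := psumr_eq0P (fun j _ => sqr_ge0 (A i j)) (h1 i isT).
by have /eqP := h2 j isT; rewrite sqrf_eq0 => /eqP.
Qed.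

Lemma frob_innerC m n (A B : 'M[R]_(m, n)) : frob_inner A B = frob_inner B A.
Proof. by apply: eq_bigr => i _; apply: eq_bigr => j _; rewrite mulrC. Qed.

Lemma frob_innerDl m n (A B C : 'M[R]_(m, n)) :
  frob_inner (A + B) C = frob_inner A C + frob_inner B C.
Proof.
rewrite /frob_inner -big_split; apply: eq_bigr => i _; rewrite -big_split.
by apply: eq_bigr => j _; rewrite mxE mulrDl.
Qed.

Lemma frob_innerZl m n a (A C : 'M[R]_(m, n)) :
  frob_inner (a *: A) C = a * frob_inner A C.
Proof.
rewrite /frob_inner mulr_sumr; apply: eq_bigr => i _; rewrite mulr_sumr.
by apply: eq_bigr => j _; rewrite mxE mulrA.
Qed.

Lemma frob_innerNl m n (A C : 'M[R]_(m, n)) :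
  frob_inner (- A) C = - frob_inner A C.
Proof. by rewrite -scaleN1r frob_innerZl mulN1r. Qed.

Lemma frob_innerDr m n (A B C : 'M[R]_(m, n)) :
  frob_inner C (A + B) = frob_inner C A + frob_inner C B.
Proof. by rewrite frob_innerC frob_innerDl !(frob_innerC C). Qed.

Lemma frob_innerZr m n a (A C : 'M[R]_(m, n)) :
  frob_inner C (a *: A) = a * frob_inner C A.
Proof. by rewrite frob_innerC frob_innerZl frob_innerC. Qed.

Lemma frob_innerNr m n (A C : 'M[R]_(m, n)) :
  frob_inner C (- A) = - frob_inner C A.
Proof. by rewrite frob_innerC frob_innerNl frob_innerC. Qed.

Lemma frob_inner0l m n (C : 'M[R]_(m, n)) : frob_inner 0 C = 0.
Proof. by rewrite -(scale0r 0) frob_innerZl mul0r. Qed.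

Lemma frob_inner_sqrD m n (A B : 'M[R]_(m, n)) :
  frob_inner (A + B) (A + B) =
  frob_inner A A + 2 * frob_inner A B + frob_inner B B.
Proof. rewrite frob_innerDl !frob_innerDr (frob_innerC B A); ring. Qed.

Lemma frob_inner_sqrB m n (A B : 'M[R]_(m, n)) :
  frob_inner (A - B) (A - B) =
  frob_inner A A - 2 * frob_inner A B + frob_inner B B.
Proof. rewrite frob_inner_sqrD frob_innerNr frob_innerNl frob_innerNr opprK; ring. Qed.

Lemma frob_inner_delta m n (A : 'M[R]_(m, n)) i j :
  frob_inner A (delta_mx i j) = A i j.
Proof.
rewrite /frob_inner (bigD1 i) //= (bigD1 j) //= !mxE !eqxx mulr1.
rewrite big1 ?addr0; last by move=> k /negbTE kj; rewrite mxE eqxx kj mulr0.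
rewrite big1 ?addr0 // => k /negbTE ki; apply: big1 => l _.
by rewrite mxE ki mulr0.
Qed.

Lemma frob_inner_mulmx_col m n p (A : 'M[R]_(m, n)) (F : 'M[R]_(n, p)) :
  frob_inner (A *m F) (A *m F) =
  \sum_j frob_inner (A *m col j F) (A *m col j F).
Proof.
rewrite /frob_inner exchange_big; apply: eq_bigr => j _.
apply: eq_bigr => i _; rewrite big_ord1.
suff -> : (A *m col j F) i 0 = (A *m F) i j by [].
by rewrite !mxE; apply: eq_bigr => l _; rewrite mxE.
Qed.

Lemma mulmx_tr_eq0 m n (A : 'M[R]_(m, n)) : A *m A^T = 0 -> A = 0.
Proof.
move=> h; have : frob_inner A^T A^T = 0 by rewrite frob_innerE trmxK h mxtrace0.
by move/frob_inner_eq0 => /(congr1 trmx); rewrite trmxK trmx0.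
Qed.

Lemma cvg_frob_inner m n (A B : nat -> 'M[R]_(m, n)) A0 B0 :
  A @ \oo --> A0 -> B @ \oo --> B0 ->
  (fun k => frob_inner (A k) (B k)) @ \oo --> frob_inner A0 B0.
Proof.
move=> hA hB; rewrite /frob_inner.
apply: cvg_big => [|i _]; first exact: add_continuous.
apply: cvg_big => [|j _]; first exact: add_continuous.
apply: cvgM.
  exact: (continuous_cvg _ (@coord_continuous R m n i j A0) hA).
exact: (continuous_cvg _ (@coord_continuous R m n i j B0) hB).
Qed.

End FrobeniusInner.

Section OrthogonalProjections.
Variable R : realType.

Definition orthoproj n (P : 'M[R]_n) := P^T = P /\ P *m P = P.

Lemma orthoproj_compl n (P : 'M[R]_n) : orthoproj P -> orthoproj (1%:M - P).
Proof.
move=> [h1 h2]; split; first by rewrite linearB /= trmx1 h1.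
by rewrite mulmxBl mul1mx mulmxBr mulmx1 h2 subrr subr0.
Qed.

Lemma orthoproj_conj n (V E : 'M[R]_n) :
  V^T *m V = 1%:M -> orthoproj E -> orthoproj (V *m E *m V^T).
Proof.
move=> hV [e1 e2]; split; first by rewrite !trmx_mul trmxK e1 mulmxA.
by rewrite !mulmxA -(mulmxA _ V^T V) hV mulmx1 -(mulmxA V E E) e2.
Qed.

Lemma orthoproj_pid_mx n r : orthoproj (pid_mx r : 'M[R]_n).
Proof.
split; first exact: tr_pid_mx.
by rewrite mul_pid_mx minnn; apply: pid_mx_minh.
Qed.

Lemma mxtrace_pid_mx n r : (r <= n)%N -> \tr (pid_mx r : 'M[R]_n) = r%:R.
Proof.
move=> rn; rewrite /mxtrace.
under eq_bigr do rewrite mxE eqxx andTb.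
rewrite -natr_sum -(big_mkord xpredT (fun i => nat_of_bool (i < r)%N)).
rewrite (big_cat_nat _ rn) //= [X in (X + _)%N]big_nat_cond.
rewrite (eq_bigr (fun=> 1%N)); last by move=> i /andP[/andP[_ ->]].
rewrite -big_nat_cond sum_nat_const_nat subn0 muln1 big_nat_cond big1 ?addn0 //.
by move=> i /andP[/andP[ri _] _]; rewrite ltnNge ri.
Qed.

Lemma frob_inner_orthoproj_compl m n (P : 'M[R]_n) (A B : 'M[R]_(m, n)) :
  orthoproj P -> frob_inner (A *m P) (B *m (1%:M - P)) = 0.
Proof.
move=> [h1 h2]; rewrite frob_innerE trmx_mul h1 -mulmxA mxtrace_mulC -!mulmxA.
by rewrite mulmxBl mul1mx h2 subrr !mulmx0 mxtrace0.
Qed.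

Lemma frob_inner_orthoproj_split m n (P : 'M[R]_n) (S : 'M[R]_(m, n)) :
  orthoproj P ->
  frob_inner S S = frob_inner (S *m P) (S *m P) +
                   frob_inner (S *m (1%:M - P)) (S *m (1%:M - P)).
Proof.
move=> hP; have eS : S = S *m P + S *m (1%:M - P).
  by rewrite mulmxBr mulmx1 addrC subrK.
by rewrite {1 2}eS frob_inner_sqrD frob_inner_orthoproj_compl // mulr0 addr0.
Qed.

Lemma frob_inner_mulmx_orthoproj n (P F : 'M[R]_n) :
  orthoproj P -> frob_inner (F *m P) (F *m P) = \tr (F^T *m F *m P).
Proof.
move=> [h1 h2]; rewrite frob_innerE trmx_mul h1 -mulmxA mxtrace_mulC.
by rewrite [in LHS]mulmxA -(mulmxA F P P) h2 mxtrace_mulC.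
Qed.

(* The projection is B^T (B B^T)^-1 B for a row basis B of W. *)
Lemma row_space_orthoproj m n (W : 'M[R]_(m, n)) :
  exists P : 'M[R]_n, [/\ orthoproj P, W *m P = W & \tr P = (\rank W)%:R].
Proof.
have [B hBf hWB] : exists2 B : 'M[R]_(\rank W, n), row_free B & (W <= B)%MS.
  by exists (row_base W); [exact: row_base_free | rewrite eq_row_base].
pose M := B *m B^T.
have hM : M \in unitmx.
  rewrite -row_free_unit -kermx_eq0; apply/eqP.
  have : (kermx M *m B) *m (kermx M *m B)^T = 0.
    by rewrite trmx_mul mulmxA -(mulmxA _ B) mulmx_ker mul0mx.
  by move/mulmx_tr_eq0/eqP; rewrite mulmx_free_eq0 // => /eqP.
exists (B^T *m invmx M *m B); split.
- split; first by rewrite !trmx_mul trmxK trmx_inv /M trmx_mul trmxK mulmxA.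
  by rewrite !mulmxA -(mulmxA _ B (B^T)) -/M mulmxKV.
- move: (W *m pinvmx B) (mulmxKpV hWB) => C eC.
  by rewrite -{1}eC !mulmxA -(mulmxA C B) -/M mulmxK.
- by rewrite -mulmxA mxtrace_mulC -mulmxA -/M mulVmx // mxtrace1.
Qed.

End OrthogonalProjections.

Section SpectralNorm.
Variable R : realType.

Lemma unit_cV_entry_le1 n (w : 'cV[R]_n) j : frob_inner w w = 1 -> `|w j 0| <= 1.
Proof.
move=> hw; have wj_sqr : w j 0 * w j 0 <= 1.
  rewrite -hw /frob_inner (bigD1 j) //= big_ord1 lerDl.
  by apply: sumr_ge0 => i _; rewrite big_ord1 -expr2 sqr_ge0.
have : `|w j 0| * `|w j 0| = w j 0 * w j 0.
  by rewrite -normrM ger0_norm // -expr2 sqr_ge0.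
have := normr_ge0 (w j 0); nra.
Qed.

Lemma spec_norm_has_sup m n (G : 'M[R]_(m, n)) (v : 'cV[R]_n) :
  frob_norm v = 1 ->
  has_sup [set frob_norm (G *m w) | w in [set w : 'cV[R]_n | frob_norm w = 1]].
Proof.
move=> hv; split; first by exists (frob_norm (G *m v)); exists v.
exists (Num.sqrt (\sum_i (\sum_j `|G i j|) ^+ 2)) => _ [w hw <-].
have fw : frob_inner w w = 1.
  by rewrite -(sqr_sqrtr (frob_inner_ge0 w)) -/(frob_norm w) hw expr1n.
rewrite /frob_norm ler_sqrt; last by apply: sumr_ge0 => i _; exact: sqr_ge0.
apply: ler_sum => i _; rewrite big_ord1 mxE -expr2.
have hb : `|\sum_j G i j * w j 0| <= \sum_j `|G i j|.
  apply: le_trans (ler_norm_sum _ _ _) _.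
  apply: ler_sum => j _; rewrite normrM.
  have := unit_cV_entry_le1 j fw; have := normr_ge0 (G i j).
  have := normr_ge0 (w j 0); nra.
by rewrite -real_normK ?num_real //; apply: ler_pM => //; exact: normr_ge0.
Qed.

Lemma frob_inner_mulmx_cV_le m n (G : 'M[R]_(m, n)) (x : 'cV[R]_n) :
  frob_inner (G *m x) (G *m x) <= spec_norm G ^+ 2 * frob_inner x x.
Proof.
have [->|x_neq0] := eqVneq x 0; first by rewrite mulmx0 !frob_inner0l mulr0.
set c := frob_inner x x.
have c_gt0 : 0 < c.
  rewrite lt_def frob_inner_ge0 andbT; apply: contra_neq x_neq0.
  exact: frob_inner_eq0.
set q := Num.sqrt c.
have q_gt0 : 0 < q by rewrite sqrtr_gt0.
have qq : q * q = c by rewrite -expr2 sqr_sqrtr // ltW.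
set v := q^-1 *: x.
have hv : frob_norm v = 1.
  rewrite /frob_norm frob_innerZl frob_innerZr -/c -qq.
  suff -> : q^-1 * (q^-1 * (q * q)) = 1 by rewrite sqrtr1.
  by field; exact: lt0r_neq0.
have ub : frob_norm (G *m v) <= spec_norm G.
  by apply: (sup_upper_bound (spec_norm_has_sup G hv)); exists v.
have h1 : frob_inner (G *m v) (G *m v) <= spec_norm G ^+ 2.
  rewrite -[frob_inner _ _]sqr_sqrtr ?frob_inner_ge0 //.
  by rewrite ler_sqr ?nnegrE ?sqrtr_ge0 //; apply: le_trans ub; exact: sqrtr_ge0.
rewrite /v -scalemxAr frob_innerZl frob_innerZr in h1.
have -> : frob_inner (G *m x) (G *m x) =
    (q * q) * (q^-1 * (q^-1 * frob_inner (G *m x) (G *m x))).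
  by field; exact: lt0r_neq0.
by rewrite qq mulrC; apply: ler_wpM2r => //; exact: ltW.
Qed.

Lemma frob_inner_mulmx_le m n p (N : 'M[R]_(m, n)) (F : 'M[R]_(n, p)) :
  frob_inner (N *m F) (N *m F) <= spec_norm N ^+ 2 * frob_inner F F.
Proof.
have eF : frob_inner F F = \sum_j frob_inner (col j F) (col j F).
  rewrite -{1 2}(mul1mx F) frob_inner_mulmx_col.
  by apply: eq_bigr => j _; rewrite mul1mx.
rewrite frob_inner_mulmx_col eF mulr_sumr; apply: ler_sum => j _.
exact: frob_inner_mulmx_cV_le.
Qed.

End SpectralNorm.

Section FrechetNormalCone.
Variable R : realType.

Lemma bouligand_tangent_ray m n (Om : set 'M[R]_(m, n)) X Xi :
  (forall t : R, 0 < t -> Om (X + t *: Xi)) -> bouligand_tangent Om X Xi.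
Proof.
move=> hO; exists (fun k => X + harmonic k *: Xi), harmonic; split.
- split; first by move=> k; apply: hO; exact: harmonic_gt0.
  rewrite -{2}(addr0 X); apply: cvgD; first exact: cvg_cst.
  rewrite -(scale0r Xi); apply: cvgZ; [exact: cvg_harmonic | exact: cvg_cst].
- by move=> k; exact: harmonic_gt0.
- by move=> i j ij; rewrite lef_pV2 ?posrE ?ltr0n // ler_nat.
- exact: cvg_harmonic.
- have -> : (fun k => (harmonic k)^-1 *: (X + harmonic k *: Xi - X)) = fun=> Xi.
    apply: funext => k; rewrite addrC addKr scalerA mulVf ?scale1r //.
    by rewrite gt_eqF // harmonic_gt0.
  exact: cvg_cst.
Qed.

Lemma frechet_normal_line m n (Om : set 'M[R]_(m, n)) X Y D :
  (forall t : R, Om (X + t *: D)) -> frechet_normal Om X Y -> frob_inner Y D = 0.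
Proof.
move=> hO hY; apply/eqP; rewrite eq_le.
have /hY : bouligand_tangent Om X D by apply: bouligand_tangent_ray.
move=> -> /=; have /hY : bouligand_tangent Om X (- D).
  by apply: bouligand_tangent_ray => t _; rewrite scalerN -scaleNr.
by rewrite frob_innerNr oppr_le0.
Qed.

(* Expanding |t Xi_k + alpha G|^2 >= |alpha G|^2 along the defining sequence,
   dividing by t_k and letting k -> oo leaves 2 alpha <G, Xi> >= 0. *)
Lemma frechet_normal_of_nearest m n (Om : set 'M[R]_(m, n)) X G alpha :
  0 < alpha ->
  (forall W, Om W ->
     frob_norm (X - (X - alpha *: G)) <= frob_norm (W - (X - alpha *: G))) ->
  frechet_normal Om X (- G).
Proof.
move=> alpha_gt0 hW Xi [Xs [t [[hXs cXs] t_gt0 _ t0 cY]]].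
set Y := fun k => (t k)^-1 *: (Xs k - X).
have gap_ge0 : forall k,
    0 <= t k * frob_inner (Y k) (Y k) + 2 * alpha * frob_inner (Y k) G.
  move=> k; have := hW _ (hXs k).
  have -> : Xs k - (X - alpha *: G) = t k *: Y k + alpha *: G.
    by rewrite /Y scalerA mulfV ?gt_eqF // scale1r opprB [alpha *: G - X]addrC addrA.
  rewrite opprB addrC subrK /frob_norm ler_sqrt ?frob_inner_ge0 //.
  rewrite frob_inner_sqrD !frob_innerZl !frob_innerZr => h.
  have tk := t_gt0 k; rewrite -(pmulr_rge0 _ tk); nra.
have cvg_gap : (fun k => t k * frob_inner (Y k) (Y k) + 2 * alpha * frob_inner (Y k) G)
   @ \oo --> 0 * frob_inner Xi Xi + 2 * alpha * frob_inner Xi G.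
  apply: cvgD; first exact: (cvgM t0 (cvg_frob_inner cY cY)).
  by apply: cvgM; [exact: cvg_cst | exact: (cvg_frob_inner cY (cvg_cst G))].
have : 0 <= 0 * frob_inner Xi Xi + 2 * alpha * frob_inner Xi G.
  by rewrite -(cvg_lim _ cvg_gap) //; exact: limr_ge (cvgP _ cvg_gap) (nearW _ gap_ge0).
rewrite mul0r add0r frob_innerNl frob_innerC oppr_le0.
by rewrite -mulrA pmulr_rge0 ?pmulr_rge0.
Qed.

Lemma frechet_normal_lowrank_orth m n r (X G : 'M[R]_(m, n)) :
  X \in lowrank m n r -> frechet_normal (lowrank m n r) X (- G) ->
  X *m G^T = 0 /\ G^T *m X = 0.
Proof.
move=> /set_mem hX hN.
have hL (P : 'M[R]_m) : frob_inner G (P *m X) = 0.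
  apply/eqP; rewrite -oppr_eq0 -frob_innerNl; apply/eqP.
  apply: frechet_normal_line hN => t; rewrite /lowrank /=.
  rewrite -{1}[X]mul1mx scalemxAl -mulmxDl.
  exact: leq_trans (mxrankM_maxr _ _) hX.
have hR (Q : 'M[R]_n) : frob_inner G (X *m Q) = 0.
  apply/eqP; rewrite -oppr_eq0 -frob_innerNl; apply/eqP.
  apply: frechet_normal_line hN => t; rewrite /lowrank /=.
  rewrite -{1}[X]mulmx1 scalemxAr -mulmxDr.
  exact: leq_trans (mxrankM_maxl _ _) hX.
split.
  apply: frob_inner_eq0; rewrite frob_innerE trmx_mul trmxK.
  have := hL (G *m X^T); rewrite frob_innerE mxtrace_mulC => <-.
  by rewrite !mulmxA.
apply: trmx_inj; rewrite trmx_mul trmxK trmx0.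
apply: frob_inner_eq0; rewrite frob_innerE trmx_mul trmxK.
have := hR (X^T *m G); rewrite frob_innerE => <-.
by rewrite !mulmxA.
Qed.

Lemma frechet_normal_lowrank_rank_lt m n r (X G : 'M[R]_(m, n)) :
  (\rank X < r)%N -> frechet_normal (lowrank m n r) X (- G) -> G = 0.
Proof.
move=> hX hN; apply/matrixP => i j; rewrite mxE -[G i j]opprK -frob_inner_delta.
rewrite -frob_innerNl (frechet_normal_line _ hN) ?oppr0 // => t.
set D : 'M[R]_(m, n) := t *: delta_mx i j.
have rankD : (\rank D <= 1)%N.
  by rewrite -[X in (_ <= X)%N](@mxrank_delta R m n i j) mxrankS ?scalemx_sub.
rewrite /lowrank /=.
apply: leq_trans (mxrankS (addmx_sub_adds (submx_refl X) (submx_refl D))) _.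
apply: leq_trans (mxrank_adds_leqif X D).1 _; lia.
Qed.

End FrechetNormalCone.

Section SingularValues.
Variable R : realType.

Definition svd_diag m n (s : nat -> R) : 'M[R]_(m, n) :=
  \matrix_(i < m, j < n) (if (i : nat) == j then s i else 0).

Lemma svd_diag_gram m n (s : nat -> R) : (n <= m)%N ->
  (svd_diag m n s)^T *m svd_diag m n s = diag_mx (\row_k (s k ^+ 2)).
Proof.
move=> hnm; apply/matrixP => k l; rewrite !mxE.
rewrite (bigD1 (widen_ord hnm k)) //= !mxE eqxx big1 ?addr0; last first.
  move=> i hi; rewrite !mxE; case: eqP => [e|_]; last by rewrite mul0r.
  by case/negP: hi; apply/eqP/val_inj.
have -> : ((k : nat) == l) = (k == l) by [].
by case: eqP => _; [rewrite mulr1n expr2 | rewrite mulr0n mulr0].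
Qed.

Lemma pid_mx_diag n r :
  (pid_mx r : 'M[R]_n) = diag_mx (\row_k ((k < r)%N)%:R).
Proof.
apply/matrixP => i j; rewrite !mxE.
have -> : (i == j :> nat) = (i == j) by [].
by case: (i == j); rewrite ?mulr1n ?mulr0n.
Qed.

Lemma mxtrace_tr_diag_mul n p (H : 'M[R]_(n, p)) d :
  \tr (H^T *m diag_mx d *m H) = \sum_i \sum_j d 0 i * H i j ^+ 2.
Proof.
rewrite mul_mx_diag /mxtrace; under eq_bigr do rewrite mxE.
rewrite exchange_big; apply: eq_bigr => i _; apply: eq_bigr => j _.
by rewrite !mxE expr2; ring.
Qed.

Lemma sing_val_svd m n k (X : 'M[R]_(m, n)) : sing_val k X != 0 ->
  exists U s V, is_svd X U s V /\ s k.-1 = sing_val k X.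
Proof.
rewrite /sing_val; set P := [set x | _].
have [[x Px] _ | noP] := pselect (exists x, P x); last first.
  by rewrite xgetPN ?eqxx // => x Px; apply: noP; exists x.
have [U [s [V [hX ->]]]] := xgetPex 0 (ex_intro _ x Px).
by exists U, s, V.
Qed.

Section SVD.
Variables (m n r : nat) (X : 'M[R]_(m, n)) (U : 'M[R]_m) (s : nat -> R).
Variable V : 'M[R]_n.
Hypotheses (n_le_m : (n <= m)%N) (svdX : is_svd X U s V).

Lemma svd_gram : X^T *m X = V *m diag_mx (\row_k (s k ^+ 2)) *m V^T.
Proof.
have [hU _ _ _ ->] := svdX; rewrite -(svd_diag_gram s n_le_m) !trmx_mul trmxK.
by rewrite !mulmxA -(mulmxA _ U^T U) hU mulmx1 -!mulmxA.
Qed.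

Lemma svd_sqr_lower_bound p sg (F : 'M[R]_(n, p)) : 0 <= sg ->
  (forall k : 'I_n, (k < r)%N -> sg <= s k) ->
  sg ^+ 2 * \tr (F^T *m (V *m pid_mx r *m V^T) *m F) <=
  frob_inner (X *m F) (X *m F).
Proof.
move=> sg_ge0 s_ge.
have -> : frob_inner (X *m F) (X *m F) =
    \tr ((V^T *m F)^T *m diag_mx (\row_k (s k ^+ 2)) *m (V^T *m F)).
  rewrite frob_innerE !trmx_mul trmxK !mulmxA -(mulmxA F^T X^T X) svd_gram.
  by rewrite !mulmxA.
have -> : \tr (F^T *m (V *m pid_mx r *m V^T) *m F) =
    \tr ((V^T *m F)^T *m pid_mx r *m (V^T *m F)).
  by rewrite trmx_mul trmxK !mulmxA.
rewrite pid_mx_diag !mxtrace_tr_diag_mul mulr_sumr; apply: ler_sum => i _.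
rewrite mulr_sumr; apply: ler_sum => j _; rewrite !mxE mulrA.
apply: ler_wpM2r; first exact: sqr_ge0.
case: ltnP => hi; last by rewrite mulr0 sqr_ge0.
have hs := s_ge i hi.
by rewrite mulr1 ler_sqr ?nnegrE // (le_trans sg_ge0 hs).
Qed.

Lemma svd_mulmx_top_eq0 (N : 'M[R]_(m, n)) :
  (forall k : 'I_n, (k < r)%N -> s k != 0) -> X *m N^T = 0 ->
  N *m (V *m pid_mx r *m V^T) = 0.
Proof.
move=> s_neq0 XN; have [_ hV _ _ _] := svdX.
have DY : diag_mx (\row_k (s k ^+ 2)) *m (V^T *m N^T) = 0.
  have : V^T *m (X^T *m X) *m N^T = 0 by rewrite -!mulmxA XN !mulmx0.
  by rewrite svd_gram !mulmxA hV mul1mx -!mulmxA mulmxA.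
have EY : (pid_mx r : 'M[R]_n) *m (V^T *m N^T) = 0.
  apply/matrixP => k j; move/matrixP/(_ k j): DY.
  rewrite pid_mx_diag !mul_diag_mx !mxE.
  case: ltnP => hk; last by rewrite mul0r.
  by rewrite mul1r => /eqP; rewrite mulf_eq0 sqrf_eq0 (negbTE (s_neq0 _ hk)) => /eqP.
apply: trmx_inj; rewrite trmx0 trmx_mul !trmx_mul trmxK tr_pid_mx.
by rewrite -!mulmxA EY mulmx0.
Qed.

End SVD.

End SingularValues.

Section NearestLowRank.
Variable R : realType.

Lemma proj_lowrank_id m n r (X : 'M[R]_(m, n)) :
  X \in lowrank m n r -> proj_lowrank r X X.
Proof.
by move=> hX; split => // W _; rewrite subrr /frob_norm frob_inner0l sqrtr0 sqrtr_ge0.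
Qed.

Lemma frob_inner_le_of_spectral_gap m n (X N W : 'M[R]_(m, n)) (P Q : 'M[R]_n) sg :
  N^T *m X = 0 -> N *m Q = 0 -> orthoproj P -> orthoproj Q -> W *m P = W ->
  \tr P <= \tr Q ->
  (forall F : 'M[R]_n, frob_inner (N *m F) (N *m F) <= sg ^+ 2 * frob_inner F F) ->
  (forall F : 'M[R]_n, sg ^+ 2 * \tr (F^T *m Q *m F) <= frob_inner (X *m F) (X *m F)) ->
  frob_inner N N <= frob_inner (W - (X - N)) (W - (X - N)).
Proof.
move=> NX NQ hP hQ WP trPQ N_le X_ge.
have [[Q1 Q2] [P1 P2]] := (orthoproj_compl hQ, orthoproj_compl hP).
set S := W - (X - N).
have SP : S *m (1%:M - P) = N *m (1%:M - P) - X *m (1%:M - P).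
  rewrite /S [(W - _) *m _]mulmxBl [W *m _]mulmxBr mulmx1 WP subrr add0r.
  by rewrite mulmxBl opprB.
have NX_orth : frob_inner (N *m (1%:M - P)) (X *m (1%:M - P)) = 0.
  by rewrite frob_innerE trmx_mul -mulmxA (mulmxA N^T) NX mul0mx mulmx0 mxtrace0.
have hS := frob_inner_orthoproj_split S hP.
have hN := frob_inner_orthoproj_split N hP.
rewrite SP (frob_inner_sqrB (N *m _)) NX_orth mulr0 subr0 in hS.
suff NP_le : frob_inner (N *m P) (N *m P) <=
             frob_inner (X *m (1%:M - P)) (X *m (1%:M - P)).
  have := frob_inner_ge0 (S *m P); rewrite hS hN; lra.
have -> : N *m P = N *m ((1%:M - Q) *m P).
  by rewrite mulmxA mulmxBr mulmx1 NQ subr0.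
apply: le_trans (N_le _) (le_trans _ (X_ge _)).
have -> : frob_inner ((1%:M - Q) *m P) ((1%:M - Q) *m P) = \tr P - \tr (Q *m P).
  by rewrite frob_inner_mulmx_orthoproj // Q1 Q2 mulmxBl mul1mx linearB.
have -> : \tr ((1%:M - P)^T *m Q *m (1%:M - P)) = \tr Q - \tr (Q *m P).
  by rewrite P1 mxtrace_mulC mulmxA P2 mulmxBl mul1mx linearB /= (mxtrace_mulC P).
by apply: ler_wpM2l; [exact: sqr_ge0 | rewrite lerD2r].
Qed.

Lemma proj_lowrank_of_frechet_normal m n r (X G : 'M[R]_(m, n)) alpha :
  (n <= m)%N -> (r < n)%N -> X \in lowrank m n r -> 0 < alpha ->
  (G != 0 -> alpha <= sing_val r X / spec_norm G) ->
  frechet_normal (lowrank m n r) X (- G) -> proj_lowrank r (X - alpha *: G) X.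
Proof.
move=> n_le_m r_lt_n hX alpha_gt0 hgap hN.
have [->|/hgap alpha_le] := eqVneq G 0.
  by rewrite scaler0 subr0; exact: proj_lowrank_id.
have gap_gt0 := lt_le_trans alpha_gt0 alpha_le.
have sg_neq0 : sing_val r X != 0.
  by apply: contraTneq gap_gt0 => ->; rewrite mul0r ltxx.
have [U [s [V [svdX s_r]]]] := sing_val_svd sg_neq0.
rewrite -{}s_r in sg_neq0 gap_gt0 alpha_le.
set sg := s r.-1 in sg_neq0 gap_gt0 alpha_le; set sp := spec_norm G in gap_gt0 alpha_le.
have [_ hV [s_ge0 s_dec] _ _] := svdX.
have s_ge (k : 'I_n) : (k < r)%N -> sg <= s k by move=> ?; apply: s_dec; lia.
have sg_gt0 : 0 < sg by rewrite lt_def sg_neq0 s_ge0 //; lia.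
have sp_gt0 : 0 < sp by rewrite -invr_gt0 -(pmulr_rgt0 _ sg_gt0).
have alpha_sp : alpha * sp <= sg by rewrite -ler_pdivlMr.
have [XG GX] := frechet_normal_lowrank_orth hX hN.
split => // W hW; have -> : X - (X - alpha *: G) = alpha *: G.
  by rewrite opprB addrC subrK.
rewrite /frob_norm ler_sqrt ?frob_inner_ge0 //.
have [P [hP WP trP]] := row_space_orthoproj W.
apply: (frob_inner_le_of_spectral_gap (Q := V *m pid_mx r *m V^T) (sg := sg)).
- by rewrite linearZ /= -scalemxAl GX scaler0.
- apply: (svd_mulmx_top_eq0 n_le_m svdX) => [k hk|].
    by rewrite gt_eqF // (lt_le_trans sg_gt0) ?s_ge.
  by rewrite linearZ /= -scalemxAr XG scaler0.
- exact: hP.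
- exact: orthoproj_conj hV (orthoproj_pid_mx _ _ _).
- exact: WP.
- rewrite trP mxtrace_mulC mulmxA hV mul1mx mxtrace_pid_mx ?ler_nat; last lia.
  exact: set_mem hW.
- move=> F; rewrite -scalemxAl frob_innerZl frob_innerZr mulrA.
  apply: le_trans (ler_wpM2l _ (frob_inner_mulmx_le G F)) _.
    by rewrite mulr_ge0 // ltW.
  rewrite mulrA ler_wpM2r ?frob_inner_ge0 //.
  have := mulr_ge0 (ltW alpha_gt0) (ltW sp_gt0); rewrite -/sp; nra.
- by move=> F; apply: (svd_sqr_lower_bound n_le_m svdX) => //; exact: ltW.
Qed.

End NearestLowRank.

Theorem proposition4p1 (R : realType) (m n l r : nat)
  (f : 'M[R]_(m, n) -> R) (A : 'I_l -> 'M[R]_(m, n)) (b : 'cV[R]_l)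
  (X : 'M[R]_(m, n)) (y : 'cV[R]_l) (alpha : R) (G : 'M[R]_(m, n)) :
  (n <= m)%N -> (r < n)%N ->
  C1 f ->
  lin_op A X = b -> X \in lowrank m n r ->
  0 < alpha ->
  is_gradient (fun Z => lagrangian f A b Z y) G X ->
  let s := \rank X in
  let a_stat := frechet_normal (lowrank m n r) X (- G) in
  let b_stat := proj_lowrank r (X - alpha *: G) X in
  (b_stat -> a_stat) /\
  (* beta = sigma_r(X) / ||G||_2, read as +oo when G = 0 *)
  ((s = r) -> (G != 0 -> alpha <= sing_val r X / spec_norm G) ->
     a_stat -> b_stat) /\
  ((s < r)%N -> a_stat -> b_stat).
Proof.
move=> n_le_m r_lt_n _ _ hX alpha_gt0 _ s a_stat b_stat; split; last split.
- move=> [_ nearest]; apply: frechet_normal_of_nearest alpha_gt0 _ => W hW.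
  exact/nearest/mem_set.
-
  by move=> _; exact: proj_lowrank_of_frechet_normal.
- move=> s_lt_r /(frechet_normal_lowrank_rank_lt s_lt_r) G0.
  by rewrite /b_stat G0 scaler0 subr0; exact: proj_lowrank_id.
Qed.
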